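(* Let $U$ be a Hilbert space, $H: U\rightrightarrows U$, and for each $i\in\mathbb{N}$ let $W_{i+1}, M_{i+1}, Z_{i+1}, P_{i+1}\in\mathcal{L}(U;U)$ with $Z_{i+1}M_{i+1}$ self-adjoint, positive definite and invertible, and with $Z_{i+2}M_{i+2}\ge Z_{i+1}P_{i+1}$. Let $(u^i)_{i\in\mathbb{N}}$ satisfy $0\in W_{i+1}H(u^{i+1}) + M_{i+1}(u^{i+1}-u^i)$ for all $i$. Let $\delta\in[0,1]$ and $N_{i+1}:=\delta W_{i+1}^*Z_{i+1}^*(Z_{i+1}M_{i+1})^{-1}Z_{i+1}W_{i+1}$. Suppose $H$ is $(Z_{i+1}P_{i+1}, N_{i+1}, Z_{i+2}M_{i+2})$-partially subregular at some $(\hat u,0)$ with $\hat u\in H^{-1}(0)$, in a neighbourhood $\mathcal{U}$ containing $\{u^j\}_{j=0}^\infty$. Then \[ \delta\|u^{i+1}-u^i\|^2_{Z_{i+1}M_{i+1}} + \operatorname{dist}^2_{Z_{i+2}M_{i+2}-Z_{i+1}P_{i+1}}(u^{i+1},H^{-1}(0)) \ge \operatorname{dist}^2_{Z_{i+2}M_{i+2}}(u^{i+1},H^{-1}(0)). \]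
   Context: For $T\in\mathcal{L}(U;U)$: $\|x\|_T^2:=\langle Tx,x\rangle$, $\operatorname{dist}_T^2(z,A):=\inf_{u\in A}\|z-u\|_T^2$ (with $\inf\emptyset=+\infty$); $T\ge S$ means $T-S$ positive semidefinite. Definition (partial subregularity): for Hilbert spaces $U,W$, $M,P\in\mathcal{L}(U;U)$ and $N\in\mathcal{L}(W;W)$ with $N\ge0$, $M\ge0$, $M\ge P$, a map $T:U\rightrightarrows W$ is $(P,N,M)$-partially subregular at $(\hat u,\hat w)\in\operatorname{graph}T$ if there is a neighbourhood $\mathcal{U}\ni\hat u$ with \[ \operatorname{dist}^2_N(\hat w, T(u)) + \operatorname{dist}^2_{M-P}(u, T^{-1}(\hat w)) \ge \operatorname{dist}^2_M(u,T^{-1}(\hat w)) \quad (u\in\mathcal{U}). \] *)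

From HB Require Import structures.
From mathcomp Require Import all_boot all_order all_algebra.
From mathcomp Require Import all_classical all_reals all_analysis.
Set Implicit Arguments. Unset Strict Implicit. Unset Printing Implicit Defensive.
Import Order.TTheory GRing.Theory Num.Theory.
Import numFieldNormedType.Exports.
Local Open Scope classical_set_scope.
Local Open Scope ring_scope.

(* A real Hilbert space: a complete normed space U over R whose norm comes
   from the (symmetric, bilinear) inner product [inner]. *)
Definition is_inner_product (R : realType) (U : completeNormedModType R)
  (inner : U -> U -> R) : Prop :=
  [/\ (forall x y, inner x y = inner y x),
      (forall a x y z, inner (a *: x + y) z = a * inner x z + inner y z)
    & (forall x, inner x x = `|x| ^+ 2)].

Definition is_bounded_linear (R : realType) (U : completeNormedModType R)
  (T : U -> U) : Prop :=
  (forall a x y, T (a *: x + y) = a *: T x + T y) /\ continuous T.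

Definition is_adjoint (R : realType) (U : completeNormedModType R)
  (inner : U -> U -> R) (T Ts : U -> U) : Prop :=
  forall x y, inner (T x) y = inner x (Ts y).

Definition self_adjoint (R : realType) (U : completeNormedModType R)
  (inner : U -> U -> R) (T : U -> U) : Prop :=
  forall x y, inner (T x) y = inner x (T y).

Definition positive_definite (R : realType) (U : completeNormedModType R)
  (inner : U -> U -> R) (T : U -> U) : Prop :=
  forall x, x != 0 -> 0 < inner (T x) x.

Definition is_inverse_op (R : realType) (U : completeNormedModType R)
  (T Tinv : U -> U) : Prop :=
  is_bounded_linear Tinv /\ (forall x, T (Tinv x) = x) /\ (forall x, Tinv (T x) = x).

Definition sqnormT (R : realType) (U : completeNormedModType R)
  (inner : U -> U -> R) (T : U -> U) (x : U) : R := inner (T x) x.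

Definition op_ge (R : realType) (U : completeNormedModType R)
  (inner : U -> U -> R) (T S : U -> U) : Prop :=
  forall x, sqnormT inner S x <= sqnormT inner T x.

(* dist_T^2(z, A) := inf_{u in A} ||z - u||_T^2, with inf of the empty set = +oo *)
Definition dist2T (R : realType) (U : completeNormedModType R)
  (inner : U -> U -> R) (T : U -> U) (z : U) (A : set U) : \bar R :=
  ereal_inf [set (sqnormT inner T (z - u))%:E | u in A].

Definition op_sub (R : realType) (U : completeNormedModType R)
  (T S : U -> U) : U -> U := fun x => T x - S x.

Definition inv_img (U W : Type) (T : U -> set W) (w : W) : set U :=
  [set u | T u w].

(* (P,N,M)-partial subregularity of T : U ⇉ W at (uh, wh) in graph T, with
   the neighbourhood Un made explicit. *)
Definition partially_subregular_in (R : realType) (U W : completeNormedModType R)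
  (innerU : U -> U -> R) (innerW : W -> W -> R)
  (P M : U -> U) (N : W -> W) (T : U -> set W) (uh : U) (wh : W) (Un : set U)
  : Prop :=
  [/\ is_bounded_linear P, is_bounded_linear M, is_bounded_linear N
    & [/\ op_ge innerW N (fun _ => 0), op_ge innerU M (fun _ => 0)
    & op_ge innerU M P]] /\
  [/\ T uh wh, nbhs uh Un &
      (forall u, Un u ->
        (dist2T innerW N wh (T u) + dist2T innerU (op_sub M P) u (inv_img T wh)
         >= dist2T innerU M u (inv_img T wh))%E)].

Definition partially_subregular (R : realType) (U W : completeNormedModType R)
  (innerU : U -> U -> R) (innerW : W -> W -> R)
  (P M : U -> U) (N : W -> W) (T : U -> set W) (uh : U) (wh : W) : Prop :=
  exists Un, partially_subregular_in innerU innerW P M N T uh wh Un.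

(* The step relation provides h in H(u^{i+1}) with W h = -M (u^{i+1} - u^i).
   Since N = δ (Z W)^* (Z M)^{-1} (Z W) and Z W h = -(Z M)(u^{i+1} - u^i), the
   N-norm of h is exactly δ ||u^{i+1} - u^i||^2_{Z M}.  This bounds
   dist^2_N(0, H(u^{i+1})) in the partial subregularity inequality at u^{i+1}. *)
From HB Require Import structures.
From mathcomp Require Import all_boot all_order all_algebra.
From mathcomp Require Import all_classical all_reals all_analysis.
Import Order.TTheory GRing.Theory Num.Theory.
Import numFieldNormedType.Exports.
Local Open Scope classical_set_scope.
Local Open Scope ring_scope.

Section BoundedLinear.
Context {R : realType} {U : completeNormedModType R} (T : U -> U).
Hypothesis T_lin : is_bounded_linear T.

Lemma bounded_linear0 : T 0 = 0.
Proof.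
have := T_lin.1 1 0 0; rewrite !scale1r addr0 => /(congr1 (fun z => z - T 0)).
by rewrite subrr addrK.
Qed.

Lemma bounded_linearN x : T (- x) = - T x.
Proof. by have := T_lin.1 (-1) x 0; rewrite addr0 bounded_linear0 addr0 !scaleN1r. Qed.

End BoundedLinear.

Lemma dist2T_le_sqnormT {R : realType} {U : completeNormedModType R}
    (inner : U -> U -> R) {T : U -> U} {z a : U} {A : set U} :
  A a -> (dist2T inner T z A <= (sqnormT inner T (z - a))%:E)%E.
Proof. by move=> Aa; apply: ereal_inf_lbound; exists a. Qed.

Section InnerProduct.
Context {R : realType} {U : completeNormedModType R} {inner : U -> U -> R}.
Hypothesis inner_ip : is_inner_product inner.

Let innerC x y : inner x y = inner y x.
Proof. by case: inner_ip. Qed.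

Lemma inner0l y : inner 0 y = 0.
Proof.
have [_ lin _] := inner_ip.
have := lin 1 0 0 y; rewrite scale1r addr0 mul1r => /(congr1 (fun z => z - inner 0 y)).
by rewrite subrr addrK.
Qed.

Lemma innerZl a x y : inner (a *: x) y = a * inner x y.
Proof. by have [_ lin _] := inner_ip; rewrite -[a *: x]addr0 lin inner0l addr0. Qed.

Lemma innerNl x y : inner (- x) y = - inner x y.
Proof. by rewrite -scaleN1r innerZl mulN1r. Qed.

Lemma innerNr x y : inner x (- y) = - inner x y.
Proof. by rewrite innerC innerNl innerC. Qed.

Lemma sqnormTN (S : U -> U) x :
  is_bounded_linear S -> sqnormT inner S (- x) = sqnormT inner S x.
Proof. by move=> S_lin; rewrite /sqnormT bounded_linearN // innerNl innerNr opprK. Qed.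

Lemma adjoint_comp (T Ts S Ss : U -> U) :
  is_adjoint inner T Ts -> is_adjoint inner S Ss ->
  is_adjoint inner (S \o T) (Ts \o Ss).
Proof. by move=> adjT adjS x y; rewrite /= adjS adjT. Qed.

Lemma sqnormT_scale_adjoint_conj (T Ts S : U -> U) (c : R) x :
  is_adjoint inner T Ts ->
  sqnormT inner (fun y => c *: Ts (S (T y))) x = c * sqnormT inner S (T x).
Proof. by move=> adjT; rewrite /sqnormT innerZl innerC -adjT innerC. Qed.

Lemma sqnormT_inverse_op (A Ainv : U -> U) x :
  is_inverse_op A Ainv -> sqnormT inner Ainv (A x) = sqnormT inner A x.
Proof. by case=> _ [_ AinvK]; rewrite /sqnormT AinvK innerC. Qed.

(* [N] is the operator δ (Z W)^* (Z M)^{-1} (Z W) of the theorem. *)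
Lemma sqnormT_preconditioned_residual {W M Z Ws Zs ZMinv : U -> U} (delta : R) {h d} :
  is_adjoint inner W Ws -> is_adjoint inner Z Zs -> is_bounded_linear Z ->
  is_inverse_op (Z \o M) ZMinv -> W h = - M d ->
  sqnormT inner (fun x => delta *: Ws (Zs (ZMinv (Z (W x))))) h
  = delta * sqnormT inner (Z \o M) d.
Proof.
move=> adjW adjZ Z_lin inv Wh.
rewrite (@sqnormT_scale_adjoint_conj (Z \o W) (Ws \o Zs)); last exact: adjoint_comp.
have ZWh : (Z \o W) h = - (Z \o M) d by rewrite /= Wh bounded_linearN.
by rewrite ZWh sqnormTN ?sqnormT_inverse_op //; case: inv.
Qed.

End InnerProduct.

(* Index shift: W i, M i, Z i, P i, ... stand for W_{i+1}, M_{i+1}, ... *)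
Theorem proposition3p14 (R : realType) (U : completeNormedModType R)
  (inner : U -> U -> R) (H : U -> set U)
  (W M Z P Ws Zs ZMinv : nat -> U -> U) (u : nat -> U) (delta : R) (uh : U)
  (Un : set U) :
  is_inner_product inner ->
  (forall i, [/\ is_bounded_linear (W i), is_bounded_linear (M i),
                 is_bounded_linear (Z i) & is_bounded_linear (P i)]) ->
  (forall i, is_adjoint inner (W i) (Ws i)) ->
  (forall i, is_adjoint inner (Z i) (Zs i)) ->
  (forall i, self_adjoint inner (Z i \o M i)) ->
  (forall i, positive_definite inner (Z i \o M i)) ->
  (forall i, is_inverse_op (Z i \o M i) (ZMinv i)) ->
  (forall i, op_ge inner (Z i.+1 \o M i.+1) (Z i \o P i)) ->
  (forall i, exists h, H (u i.+1) h /\ W i h + M i (u i.+1 - u i) = 0) ->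
  0 <= delta <= 1 ->
  H uh 0 ->
  (forall j, Un (u j)) ->
  (forall i, partially_subregular_in inner inner (Z i \o P i) (Z i.+1 \o M i.+1)
     (fun x => delta *: Ws i (Zs i (ZMinv i (Z i (W i x))))) H uh 0 Un) ->
  forall i,
    ((delta * sqnormT inner (Z i \o M i) (u i.+1 - u i))%:E
     + dist2T inner (op_sub (Z i.+1 \o M i.+1) (Z i \o P i)) (u i.+1) (inv_img H 0%R)
     >= dist2T inner (Z i.+1 \o M i.+1) (u i.+1) (inv_img H 0%R))%E.
Proof.
move=> ip lin adjW adjZ _ _ inv _ step _ _ Un_u subreg i.
have [h [Hh stepE]] := step i.
have [[_ _ N_lin _] [_ _ subreg_ineq]] := subreg i.
apply: le_trans (subreg_ineq _ (Un_u i.+1)) _; apply: leeD => //.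
apply: le_trans (dist2T_le_sqnormT inner Hh) _.
have [_ _ Z_lin _] := lin i.
have Wh : W i h = - M i (u i.+1 - u i) by apply/eqP; rewrite -subr_eq0 opprK stepE.
rewrite lee_fin sub0r (sqnormTN ip) //.
by rewrite (sqnormT_preconditioned_residual ip delta (adjW i) (adjZ i) Z_lin (inv i) Wh).
Qed.
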